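(* For all formulas $\varphi,\psi,\vartheta$ the following semantic equivalences hold (in every $\mathcal L$-model): $$\forall(\varphi\Rightarrow\psi).\vartheta\ \equiv\ (\varphi\wedge\forall\Omega.\forall\psi.\vartheta)\vee\forall\Omega.\vartheta,$$ $$\neg\forall(\varphi\Rightarrow\psi).\vartheta\ \equiv\ (\neg\varphi\wedge\neg\forall\Omega.\vartheta)\vee\neg\forall\Omega.\forall\psi.\vartheta.$$
   Context: Fix countable, nonempty, pairwise disjoint sets $\mathrm{AtF}$ (atomic formulas), $\mathrm{AtP}$ (atomic programs) and $I$ (agent names). The formulas $\mathcal L_s$ and programs $\mathcal L_a$ of Type PDL ($\tau$PDL) are generated by $\varphi::=p\mid\neg\varphi\mid\forall A.\varphi\mid \mathsf C_\imath A$ and $A::=a\mid\varphi\mid\varphi\Rightarrow\varphi\mid AA\mid A+A\mid A^*$ with $p\in\mathrm{AtF}$, $a\in\mathrm{AtP}$, $\imath\in I$ (a formula used as a program is a test; $AB$ is sequential composition, $A+B$ choice, $\forall A.\varphi$ is the box $[A]\varphi$). Other connectives are abbreviations, e.g. $\varphi\to\psi:=\forall\varphi.\psi$. $\mathsf{tt}$ is a fixed tautology, $\mathsf{ff}=\neg\mathsf{tt}$, $\Omega:=\mathsf{tt}\Rightarrow\mathsf{tt}$. $\Sigma$ is the set of programs of the forms $a$, $\varphi$, $\varphi\Rightarrow\psi$; $\Sigma^+$ the finite nonempty sequential compositions of elements of $\Sigma$. An $\mathcal L$-model $M$ consists of a nonempty set $W$, a relation $\to_a\subseteq W\times W$ for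 each $a\in\mathrm{AtP}$, a valuation $\rho:\mathrm{AtF}\to2^W$, and for each $\imath\in I$, $w\in W$ a set $\imath^M(w)\subseteq\bigcup\{\to_A:A\in\Sigma^+\}$. Interpretation: $[\![p]\!]=\rho(p)$, $[\![\neg\varphi]\!]=W\setminus[\![\varphi]\!]$, $[\![\forall A.\varphi]\!]=\{w:\forall w'(w\to_Aw'\Rightarrow w'\in[\![\varphi]\!])\}$; $\to_\varphi=\{(w,w):w\in[\![\varphi]\!]\}$, $\to_{AB}=\to_A\circ\to_B$ (first $A$ then $B$), $\to_{A+B}=\to_A\cup\to_B$, $\to_{A^*}=\bigcup_{n\ge0}(\to_A)^n$, $\to_{\varphi\Rightarrow\psi}=\bigcup\{\to_A: A\in\Sigma^+,\ \forall w\in[\![\varphi]\!]\,\forall w'(w\to_Aw'\Rightarrow w'\in[\![\psi]\!])\}$. (Capabilities are interpreted as in the standard relational semantics of $\tau$PDL but play no role here.) $\varphi\equiv\psi$ means $[\![\varphi]\!]=[\![\psi]\!]$ in every $\mathcal L$-model. *)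

From Stdlib Require Import Classical.
Set Implicit Arguments.

Section Syntax.
Variables (AtF AtP Ag : Type).

Inductive form : Type :=
| FAtom : AtF -> form
| FNeg  : form -> form
| FBox  : prog -> form -> form          (* forall A. phi  =  [A]phi *)
| FCap  : Ag -> prog -> form
with prog : Type :=
| PAtom : AtP -> prog
| PTest : form -> prog
| PSpec : form -> form -> prog
| PSeq  : prog -> prog -> prog
| PCho  : prog -> prog -> prog
| PStar : prog -> prog.

Definition FImp (phi psi : form) : form := FBox (PTest phi) psi.
Definition FOr (phi psi : form) : form := FImp (FNeg phi) psi.
Definition FAnd (phi psi : form) : form := FNeg (FImp phi (FNeg psi)).
(* tt is a fixed tautology; we fix it as p0 -> p0 for a chosen atom p0 *)
Definition Ftt (p0 : AtF) : form := FImp (FAtom p0) (FAtom p0).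
Definition Fff (p0 : AtF) : form := FNeg (Ftt p0).
Definition POmega (p0 : AtF) : prog := PSpec (Ftt p0) (Ftt p0).

Definition inSigma (A : prog) : Prop :=
  match A with PAtom _ | PTest _ | PSpec _ _ => True | _ => False end.

Inductive SigmaPlus : prog -> Prop :=
| SP_base : forall A, inSigma A -> SigmaPlus A
| SP_seq  : forall A B, SigmaPlus A -> SigmaPlus B -> SigmaPlus (PSeq A B).

End Syntax.

Fixpoint rel_pow (W : Type) (R : W -> W -> Prop) (n : nat) : W -> W -> Prop :=
  match n with
  | O => fun w w' => w = w'
  | S k => fun w w' => exists v, R w v /\ rel_pow R k v w'
  end.

(* The frame part of an L-model (capability sets are attached in [interp],
   since their constraint refers to the program relations). *)
Record lmodel (AtF AtP : Type) : Type := {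
  world : Type;
  world_ne : inhabited world;
  acc : AtP -> world -> world -> Prop;
  val : AtF -> world -> Prop
}.

(* The clause for phi => psi quantifies
   over all programs of Sigma^+, so it is given as a defining equation that
   the interpretation must satisfy. *)
Record interp (AtF AtP Ag : Type) (M : lmodel AtF AtP) : Type := {
  sem : form AtF AtP Ag -> world M -> Prop;
  rel : prog AtF AtP Ag -> world M -> world M -> Prop;
  capset : Ag -> world M -> world M -> world M -> Prop;
  capset_sub : forall i w u v, capset i w u v ->
      exists A, SigmaPlus A /\ rel A u v;
  sem_atom : forall p w, sem (FAtom _ _ p) w <-> val M p w;
  sem_neg  : forall phi w, sem (FNeg phi) w <-> ~ sem phi w;
  sem_box  : forall A phi w,
      sem (FBox A phi) w <-> (forall w', rel A w w' -> sem phi w');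
  rel_atom : forall a w w', rel (PAtom _ _ a) w w' <-> acc M a w w';
  rel_test : forall phi w w', rel (PTest phi) w w' <-> (w = w' /\ sem phi w);
  rel_spec : forall phi psi w w', rel (PSpec phi psi) w w' <->
      (exists A, SigmaPlus A /\
         (forall u, sem phi u -> forall u', rel A u u' -> sem psi u') /\
         rel A w w');
  rel_seq  : forall A B w w', rel (PSeq A B) w w' <->
      (exists v, rel A w v /\ rel B v w');
  rel_cho  : forall A B w w', rel (PCho A B) w w' <-> (rel A w w' \/ rel B w w');
  rel_star : forall A w w', rel (PStar A) w w' <->
      (exists n, rel_pow (rel A) n w w')
}.

Definition sem_equiv (AtF AtP Ag : Type) (phi psi : form AtF AtP Ag) : Prop :=
  forall (M : lmodel AtF AtP) (Iv : interp Ag M) (w : world M),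
    sem Iv phi w <-> sem Iv psi w.

(* The program  phi => psi  relates w to w' exactly when some Sigma^+ program
   B reaches w' from w and B is correct for the specification (phi, psi).
   Two Sigma^+ programs realise every such step:
   - if phi fails at w, the program  (~phi)? ; B  is vacuously correct, so
     phi => psi reaches everything Sigma^+-reachable from w;
   - if w' satisfies psi, the program  B ; psi?  is correct for any phi, so
     phi => psi reaches every Sigma^+-reachable psi-world.
   Conversely each phi => psi step is a Sigma^+ step, and it lands in psi
   whenever phi holds at its source.  Since Omega = tt => tt relates exactly
   the Sigma^+-reachable pairs, this yields the characterisation
   [phi => psi]theta  <->  (phi /\ [Omega][psi?]theta) \/ [Omega]theta
   (lemma [sem_spec_box]); the theorem's first equivalence is this lemma
   read through the derived connectives, and the second is its classical
   negation, using that [Omega]theta implies [Omega][psi?]theta. *)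

From Stdlib Require Import Classical.

Section SpecificationBox.
Context {AtF AtP Ag : Type} {M : lmodel AtF AtP} (Iv : interp Ag M).

Notation form := (form AtF AtP Ag).
Notation prog := (prog AtF AtP Ag).

Lemma sem_imp (a b : form) w :
  sem Iv (FImp a b) w <-> (sem Iv a w -> sem Iv b w).
Proof.
  unfold FImp. rewrite sem_box. split.
  - intros H Ha. apply H, rel_test. auto.
  - intros H w' Hr. apply rel_test in Hr as [<- Ha]. auto.
Qed.

Lemma sem_or (a b : form) w :
  sem Iv (FOr a b) w <-> (sem Iv a w \/ sem Iv b w).
Proof.
  unfold FOr. rewrite sem_imp, sem_neg.
  destruct (classic (sem Iv a w)); tauto.
Qed.

Lemma sem_and (a b : form) w :
  sem Iv (FAnd a b) w <-> (sem Iv a w /\ sem Iv b w).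
Proof.
  unfold FAnd. rewrite sem_neg, sem_imp, sem_neg.
  destruct (classic (sem Iv a w)), (classic (sem Iv b w)); tauto.
Qed.

Definition sigma_reach (w w' : world M) : Prop :=
  exists A : prog, SigmaPlus A /\ rel Iv A w w'.

Lemma rel_spec_sound (phi psi : form) w w' :
  rel Iv (PSpec phi psi) w w' ->
  sigma_reach w w' /\ (sem Iv phi w -> sem Iv psi w').
Proof.
  rewrite rel_spec. intros (A & HA & Hcorrect & Hr).
  split; [exists A; auto | eauto].
Qed.

(* Sigma^+ steps into psi are steps of phi => psi, realised by B ; psi?. *)
Lemma rel_spec_of_postcondition (phi psi : form) w w' :
  sigma_reach w w' -> sem Iv psi w' -> rel Iv (PSpec phi psi) w w'.
Proof.
  intros (B & HB & Hr) Hpsi. apply rel_spec.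
  exists (PSeq B (PTest psi)). repeat split.
  - apply SP_seq; [exact HB | apply SP_base; exact I].
  - intros u _ u' Hu. apply rel_seq in Hu as (v & _ & Ht).
    apply rel_test in Ht as [-> Ht]. exact Ht.
  - apply rel_seq. exists w'. split; [exact Hr | apply rel_test; auto].
Qed.

(* Where phi fails, every Sigma^+ step is a step of phi => psi,
   realised by the vacuously correct program (~phi)? ; B. *)
Lemma rel_spec_of_failed_precondition (phi psi : form) w w' :
  ~ sem Iv phi w -> sigma_reach w w' -> rel Iv (PSpec phi psi) w w'.
Proof.
  intros Hphi (B & HB & Hr). apply rel_spec.
  exists (PSeq (PTest (FNeg phi)) B). repeat split.
  - apply SP_seq; [apply SP_base; exact I | exact HB].
  - intros u Hu u' Hu'. apply rel_seq in Hu' as (v & Ht & _).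
    apply rel_test in Ht as [_ Ht]. apply sem_neg in Ht. contradiction.
  - apply rel_seq. exists w. split; [apply rel_test; rewrite sem_neg; auto | exact Hr].
Qed.

Lemma sem_omega_box (p0 : AtF) (x : form) w :
  sem Iv (FBox (POmega _ _ p0) x) w <->
  (forall w', sigma_reach w w' -> sem Iv x w').
Proof.
  rewrite sem_box. split.
  - intros H w' Hreach. apply H, rel_spec_of_postcondition; [exact Hreach |].
    apply sem_imp. auto.
  - intros H w' Hr. apply rel_spec_sound in Hr as [Hreach _]. auto.
Qed.

Lemma sem_spec_box (phi psi theta : form) w :
  sem Iv (FBox (PSpec phi psi) theta) w <->
  (sem Iv phi w /\
     (forall w', sigma_reach w w' -> sem Iv psi w' -> sem Iv theta w'))
  \/ (forall w', sigma_reach w w' -> sem Iv theta w').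
Proof.
  rewrite sem_box. split.
  - intros H. destruct (classic (sem Iv phi w)) as [Hphi | Hphi].
    + left. split; [exact Hphi |]. intros w' Hreach Hpsi.
      apply H, rel_spec_of_postcondition; assumption.
    + right. intros w' Hreach.
      apply H, rel_spec_of_failed_precondition; assumption.
  - intros Hcases w' Hr. apply rel_spec_sound in Hr as [Hreach Hpost].
    destruct Hcases as [[Hphi H] | H]; auto.
Qed.

End SpecificationBox.

Theorem mainTheorem4 (AtF AtP Ag : Type)
  (hF : exists f : AtF -> nat, forall x y, f x = f y -> x = y)
  (hP : exists f : AtP -> nat, forall x y, f x = f y -> x = y)
  (hI : exists f : Ag -> nat, forall x y, f x = f y -> x = y)
  (hP0 : inhabited AtP) (hI0 : inhabited Ag)
  (p0 : AtF) (phi psi theta : form AtF AtP Ag) :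
  sem_equiv (FBox (PSpec phi psi) theta)
    (FOr (FAnd phi (FBox (POmega _ _ p0) (FBox (PTest psi) theta)))
         (FBox (POmega _ _ p0) theta))
  /\
  sem_equiv (FNeg (FBox (PSpec phi psi) theta))
    (FOr (FAnd (FNeg phi) (FNeg (FBox (POmega _ _ p0) theta)))
         (FNeg (FBox (POmega _ _ p0) (FBox (PTest psi) theta)))).
Proof.
  split; intros M Iv w.
  - rewrite sem_spec_box, sem_or, sem_and, !sem_omega_box.
    setoid_rewrite (sem_imp Iv psi theta). tauto.
  - rewrite sem_neg, sem_spec_box, sem_or, sem_and, !sem_neg, !sem_omega_box.
    setoid_rewrite (sem_imp Iv psi theta).
    assert (Hweaken :
      (forall w', sigma_reach Iv w w' -> sem Iv theta w') ->
      (forall w', sigma_reach Iv w w' -> sem Iv psi w' -> sem Iv theta w'))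
      by auto.
    destruct (classic (sem Iv phi w)); tauto.
Qed.
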